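(* Consider online gradient descent $A$ on a finite-dimensional space with learning rates $\eta_t$ such that $\sum_{t=1}^T\eta_t=O(\rho_1(T))$. If $R_0(A)=O(\rho_2(T))$, then $R'_0(A)=O(\rho_1(T)+\rho_2(T))$.
   Context: The decision space $F\subseteq(\mathbb{R}^+)^n$ is non-empty, convex, bounded and closed; $\|\cdot\|$ is a seminorm on $\mathbb{R}^n$; cost functions $c^t:F\to\mathbb{R}^+$ are convex with (sub)gradients whose Euclidean norms $\|\nabla c^t(\cdot)\|_2$ are uniformly bounded over the sequence. Online gradient descent (OGD) with learning rates $\eta_t$: select an arbitrary $x^1\in F$, and at each step $t\ge1$ set $x^{t+1}=P(x^t-\eta_t\nabla c^t(x^t))$, where $P(y)=\arg\min_{x\in F}\|x-y\|_2$ is the Euclidean projection onto $F$; here $x^t$ is chosen before $c^t$ is revealed. With $x^0=0$, $C_0^\alpha(A)=\sum_{t=1}^T c^t(x^t)+\alpha\|x^t-x^{t-1}\|$ and $OPT_s=\min_{x\in F}\sum_{t=1}^Tc^t(x)$. The regret $R_0(A)$ is (at most) $\rho(T)$ if $C_0^0(A)-OPT_s\le\rho(T)$ for every admissible cost sequence, and $R'_0(A)$ is defined the same way with $C_0^1(A)$ in place of $C_0^0(A)$. *)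

From mathcomp Require Import all_boot all_order all_algebra.
From mathcomp Require Import all_classical all_reals all_analysis.
Set Implicit Arguments. Unset Strict Implicit. Unset Printing Implicit Defensive.
Import Order.TTheory GRing.Theory Num.Theory.
Local Open Scope classical_set_scope.
Local Open Scope ring_scope.

Section OGD.
Variables (R : realType) (n : nat).
Local Notation V := 'rV[R]_n.

Definition dot (x y : V) : R := \sum_(i < n) x 0 i * y 0 i.
Definition norm2 (x : V) : R := Num.sqrt (dot x x).

Definition is_seminorm (N : V -> R) : Prop :=
  (forall x y, N (x + y) <= N x + N y) /\ (forall (a : R) x, N (a *: x) = `|a| * N x).

Definition convex_subset (F : set V) : Prop :=
  forall x y (l : R), F x -> F y -> 0 <= l <= 1 -> F (l *: x + (1 - l) *: y).

Definition decision_space (F : set V) : Prop :=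
  [/\ F !=set0, convex_subset F, bounded_set (F : set 'rV[R^o]_n),
      closed (F : set 'rV[R^o]_n)
    & forall x, F x -> forall i, 0 <= x 0 i].

Definition convex_on (F : set V) (c : V -> R) : Prop :=
  forall x y (l : R), F x -> F y -> 0 <= l <= 1 ->
    c (l *: x + (1 - l) *: y) <= l * c x + (1 - l) * c y.

Definition subgradient (F : set V) (c : V -> R) (x g : V) : Prop :=
  forall y, F y -> c x + dot g (y - x) <= c y.

Definition admissible (F : set V) (G : R) (c : nat -> V -> R) (g : nat -> V -> V) :
  Prop :=
  forall t, (1 <= t)%N ->
    [/\ forall x, F x -> 0 <= c t x,
        convex_on F (c t),
        forall x, F x -> subgradient F (c t) x (g t x)
      & forall x, F x -> norm2 (g t x) <= G].

Definition is_proj (F : set V) (y p : V) : Prop :=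
  F p /\ forall z, F z -> norm2 (p - y) <= norm2 (z - y).

(* x is the run of OGD with learning rates eta, start x1, on feedback g;
   x 0 = 0 is the convention x^0 = 0. *)
Definition ogd_run (F : set V) (eta : nat -> R) (x1 : V) (g : nat -> V -> V)
    (x : nat -> V) : Prop :=
  [/\ x 0%N = 0, x 1%N = x1
    & forall t, (1 <= t)%N -> is_proj F (x t - eta t *: g t (x t)) (x t.+1)].

Definition cost (N : V -> R) (alpha : R) (c : nat -> V -> R) (x : nat -> V) (T : nat)
  : R := \sum_(1 <= t < T.+1) (c t (x t) + alpha * N (x t - x t.-1)).

Definition static_cost (c : nat -> V -> R) (T : nat) (y : V) : R :=
  \sum_(1 <= t < T.+1) c t y.

(* The (worst-case) regret of OGD w.r.t. C_0^alpha is O(rho(T)):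
   there are constants K, T0 such that for all T >= T0 and every admissible
   cost sequence, C_0^alpha(A) - OPT_s <= K * rho T.  (C - OPT_s <= b is written
   as C - sum_t c^t(y) <= b for every y in F, OPT_s being the minimum.) *)
Definition ogd_regret_bigO (F : set V) (N : V -> R) (G : R) (eta : nat -> R) (x1 : V)
    (alpha : R) (rho : nat -> R) : Prop :=
  exists (K : R) (T0 : nat), forall T, (T0 <= T)%N ->
    forall c g x, admissible F G c g -> ogd_run F eta x1 g x ->
      forall y, F y -> cost N alpha c x T - static_cost c T y <= K * rho T.

End OGD.

Definition seq_bigO (R : realType) (f rho : nat -> R) : Prop :=
  exists (K : R) (T0 : nat), forall T, (T0 <= T)%N -> f T <= K * rho T.

(** Split the switching cost off: C_0^1 = C_0^0 + \sum_t ||x^t - x^(t-1)||.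
    The first part is controlled by the assumption on R_0.  Every seminorm on
    R^n is dominated by a multiple of the Euclidean norm, and one projected
    gradient step moves by at most 2 eta_t G in Euclidean norm (the projection
    of y = x^t - eta_t g is no farther from y than x^t is), so the switching
    cost is at most ||x^1|| + O(\sum_t eta_t), and ||x^1|| <= (||x^1|| / eta_1)
    \sum_t eta_t, giving O(rho_1(T)). *)

From mathcomp Require Import all_boot all_order all_algebra.
From mathcomp Require Import all_classical all_reals all_analysis.
From mathcomp Require Import ring lra.
Set Implicit Arguments. Unset Strict Implicit. Unset Printing Implicit Defensive.
Import Order.TTheory GRing.Theory Num.Theory.
Local Open Scope classical_set_scope.
Local Open Scope ring_scope.

Section Norm2.
Variables (R : realType) (n : nat).
Implicit Types (v : 'rV[R]_n) (a : R).

Lemma norm2_ge_coord v i : `|v 0 i| <= norm2 v.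
Proof.
have sqr_sum_ge0 (P : pred 'I_n) : 0 <= \sum_(j | P j) v 0 j * v 0 j.
  by apply: sumr_ge0 => j _; rewrite -expr2 sqr_ge0.
rewrite /norm2 /dot -sqrtr_sqr ler_sqrt // (bigD1 i) //= -expr2 lerDl.
exact: sqr_sum_ge0.
Qed.

Lemma norm2Z a v : norm2 (a *: v) = `|a| * norm2 v.
Proof.
rewrite /norm2 /dot.
have -> : \sum_(i < n) (a *: v) 0 i * (a *: v) 0 i
          = a ^+ 2 * \sum_(i < n) v 0 i * v 0 i.
  by rewrite mulr_sumr; apply: eq_bigr => i _; rewrite !mxE; ring.
by rewrite sqrtrM ?sqr_ge0 // sqrtr_sqr.
Qed.

Lemma norm2N v : norm2 (- v) = norm2 v.
Proof. by rewrite -scaleN1r norm2Z normrN normr1 mul1r. Qed.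

End Norm2.

Section Seminorm.
Variables (R : realType) (n : nat) (N : 'rV[R]_n -> R).
Hypothesis hN : is_seminorm N.

Lemma seminormD u v : N (u + v) <= N u + N v.
Proof. exact: hN.1. Qed.

Lemma seminormZ a v : N (a *: v) = `|a| * N v.
Proof. exact: hN.2. Qed.

Lemma seminorm0 : N 0 = 0.
Proof. by rewrite -(scale0r (0 : 'rV[R]_n)) seminormZ normr0 mul0r. Qed.

Lemma seminormN v : N (- v) = N v.
Proof. by rewrite -scaleN1r seminormZ normrN normr1 mul1r. Qed.

Lemma seminorm_ge0 v : 0 <= N v.
Proof.
have := seminormD v (- v); rewrite subrr seminorm0 seminormN -mulr2n.
by rewrite pmulrn_lge0.
Qed.

Definition seminorm_const : R := \sum_(j < n) N 'e_j.

Lemma seminorm_const_ge0 : 0 <= seminorm_const.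
Proof. by apply: sumr_ge0 => j _; exact: seminorm_ge0. Qed.

Lemma seminorm_le_norm2 v : N v <= norm2 v * seminorm_const.
Proof.
rewrite {1}(row_sum_delta v) mulr_sumr.
apply: (@le_trans _ _ (\sum_(j < n) N (v 0 j *: 'e_j))).
  elim/big_rec2: _ => [|j u1 u2 _ IH]; first by rewrite seminorm0.
  by apply: le_trans (seminormD _ _) _; rewrite lerD2l.
apply: ler_sum => j _; rewrite seminormZ ler_wpM2r ?seminorm_ge0 //.
exact: norm2_ge_coord.
Qed.

Lemma seminorm_proj_step (F : set 'rV[R]_n) y p z :
  is_proj F y p -> F z -> N (p - z) <= 2 * seminorm_const * norm2 (z - y).
Proof.
case=> _ proj_min Fz.
have -> : p - z = (p - y) + (y - z) by rewrite addrA subrK.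
apply: le_trans (seminormD _ _) _.
have hp := ler_wpM2r seminorm_const_ge0 (proj_min z Fz).
have hy : norm2 (y - z) = norm2 (z - y) by rewrite -opprB norm2N.
have := le_trans (seminorm_le_norm2 (p - y)) hp.
have := seminorm_le_norm2 (y - z); rewrite hy.
lra.
Qed.

End Seminorm.

Section OGDRun.
Variables (R : realType) (n : nat) (F : set 'rV[R]_n) (N : 'rV[R]_n -> R).
Variables (G : R) (eta : nat -> R) (x1 : 'rV[R]_n).
Variables (c : nat -> 'rV[R]_n -> R) (g : nat -> 'rV[R]_n -> 'rV[R]_n).
Variable x : nat -> 'rV[R]_n.
Hypotheses (hN : is_seminorm N) (Fx1 : F x1).
Hypothesis eta_gt0 : forall t, (1 <= t)%N -> 0 < eta t.
Hypotheses (hadm : admissible F G c g) (hrun : ogd_run F eta x1 g x).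

Let D := 2 * seminorm_const N * `|G|.

Lemma ogd_run_mem t : (1 <= t)%N -> F (x t).
Proof.
case: hrun => _ ex1 hproj; elim: t => [//|[|t] IH] _; first by rewrite ex1.
by case: (hproj t.+1 isT).
Qed.

Lemma ogd_step_le t : (1 <= t)%N -> N (x t.+1 - x t) <= D * eta t.
Proof.
move=> t1; case: hrun => _ _ hproj.
apply: le_trans (seminorm_proj_step hN (hproj t t1) (ogd_run_mem t1)) _.
have -> : x t - (x t - eta t *: g t (x t)) = eta t *: g t (x t).
  by rewrite opprB addrC subrK.
have hg : norm2 (g t (x t)) <= `|G|.
  case: (hadm t1) => _ _ _ /(_ _ (ogd_run_mem t1)) g_le.
  exact: le_trans g_le (ler_norm G).
rewrite norm2Z gtr0_norm ?eta_gt0 //.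
rewrite (_ : D * eta t = 2 * seminorm_const N * (eta t * `|G|)); last first.
  by rewrite /D; ring.
rewrite ler_wpM2l ?mulr_ge0 ?seminorm_const_ge0 //.
by rewrite ler_wpM2l // ltW // eta_gt0.
Qed.

Lemma ogd_switching_cost_le T : (1 <= T)%N ->
  \sum_(1 <= t < T.+1) N (x t - x t.-1)
    <= N x1 + D * \sum_(1 <= t < T) eta t.
Proof.
case: hrun => x0 ex1 _ T1.
rewrite big_ltn ?ltnS // /= x0 ex1 subr0 lerD2l big_add1 /= mulr_sumr.
rewrite [X in _ <= X]big_nat_cond big_nat_cond.
by apply: ler_sum => t /andP[/andP[t1 _] _]; exact: ogd_step_le.
Qed.

Lemma ogd_switching_cost_le_sum_eta T : (1 <= T)%N ->
  \sum_(1 <= t < T.+1) N (x t - x t.-1)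
    <= (N x1 / eta 1%N + D) * \sum_(1 <= t < T.+1) eta t.
Proof.
move=> T1; apply: le_trans (ogd_switching_cost_le T1) _.
have eta_sum_ge0 a b : (1 <= a)%N -> 0 <= \sum_(a <= t < b) eta t.
  move=> a1; rewrite big_nat_cond; apply: sumr_ge0 => t /andP[/andP[a_le _] _].
  exact/ltW/eta_gt0/(leq_trans a1 a_le).
have eta1_le : eta 1%N <= \sum_(1 <= t < T.+1) eta t.
  by rewrite big_ltn // lerDl eta_sum_ge0.
have sum_le : \sum_(1 <= t < T) eta t <= \sum_(1 <= t < T.+1) eta t.
  by rewrite big_nat_recr //= lerDl ltW // eta_gt0.
rewrite mulrDl; apply: lerD.
  have eta1_gt0 : 0 < eta 1%N by exact: eta_gt0.
  have := ler_wpM2l (divr_ge0 (seminorm_ge0 hN x1) (ltW eta1_gt0)) eta1_le.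
  by rewrite mulfVK ?gt_eqF.
by rewrite ler_wpM2l // /D !mulr_ge0 ?seminorm_const_ge0.
Qed.

End OGDRun.

Lemma cost1E (R : realType) (n : nat) (N : 'rV[R]_n -> R) c x T :
  cost N 1 c x T = cost N 0 c x T + \sum_(1 <= t < T.+1) N (x t - x t.-1).
Proof.
by rewrite /cost -big_split; apply: eq_bigr => t _; rewrite mul0r mul1r addr0.
Qed.

Lemma bigO_add_le (R : realType) (a b A K1 K2 r1 r2 : R) :
  0 <= A -> 0 <= r1 -> 0 <= r2 -> a <= K2 * r2 -> b <= A * (K1 * r1) ->
  a + b <= (`|K2| + `|A * K1|) * (r1 + r2).
Proof.
move=> A_ge0 r1_ge0 r2_ge0 a_le b_le.
have K2_le : K2 * r2 <= `|K2| * r2 by rewrite ler_wpM2r // ler_norm.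
have K1_le : A * (K1 * r1) <= `|A * K1| * r1.
  by rewrite mulrA ler_wpM2r // ler_norm.
have cross_ge0 : 0 <= `|K2| * r1 + `|A * K1| * r2 by rewrite addr_ge0 ?mulr_ge0.
lra.
Qed.

Theorem proposition1 (R : realType) (n : nat) (F : set 'rV[R]_n)
    (N : 'rV[R]_n -> R) (G : R) (eta : nat -> R) (x1 : 'rV[R]_n)
    (rho1 rho2 : nat -> R) :
  decision_space F -> is_seminorm N -> F x1 ->
  (forall t, (1 <= t)%N -> 0 < eta t) ->
  (forall T, 0 <= rho1 T) -> (forall T, 0 <= rho2 T) ->
  seq_bigO (fun T => \sum_(1 <= t < T.+1) eta t) rho1 ->
  ogd_regret_bigO F N G eta x1 0 rho2 ->
  ogd_regret_bigO F N G eta x1 1 (fun T => rho1 T + rho2 T).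
Proof.
move=> _ hN Fx1 eta_gt0 rho1_ge0 rho2_ge0 [K1 [T1 hK1]] [K2 [T2 hK2]].
set A := N x1 / eta 1%N + 2 * seminorm_const N * `|G|.
exists (`|K2| + `|A * K1|), (maxn (maxn T1 T2) 1).
move=> T; rewrite !geq_max => /andP[/andP[T1T T2T] T_ge1] c g x hadm hrun y Fy.
have regret0 := hK2 T T2T c g x hadm hrun y Fy.
have switching := ogd_switching_cost_le_sum_eta hN Fx1 eta_gt0 hadm hrun T_ge1.
have A_ge0 : 0 <= A.
  by rewrite addr_ge0 ?divr_ge0 ?mulr_ge0 ?seminorm_ge0 ?seminorm_const_ge0 // ltW ?eta_gt0.
rewrite cost1E addrAC; apply: bigO_add_le => //.
exact: le_trans switching (ler_wpM2l A_ge0 (hK1 T T1T)).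
Qed.
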